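(* Let $H \le G$ be finite groups such that the interval $[H,G]$ is a Boolean lattice. Then there exists $g \in G$ with $\langle H, g\rangle = G$.
   Context: The interval $[H,G]$ is the lattice of subgroups $K$ with $H \le K \le G$ (meet = intersection, join = generated subgroup). A finite lattice is Boolean if it is isomorphic to the lattice of all subsets of a finite set. *)

From mathcomp Require Import all_boot all_fingroup.
Set Implicit Arguments. Unset Strict Implicit. Unset Printing Implicit Defensive.
Local Open Scope group_scope.

Definition in_interval (gT : finGroupType) (H G K : {group gT}) : bool :=
  (H \subset K) && (K \subset G).

(* [H,G] is Boolean: it is order-isomorphic (equivalently, lattice-isomorphic)
   to the lattice of all subsets of a finite set, taken w.l.o.g. as 'I_n. *)
Definition boolean_interval (gT : finGroupType) (H G : {group gT}) : Prop :=
  exists (n : nat) (f : {group gT} -> {set 'I_n}),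
    (forall K L : {group gT}, in_interval H G K -> in_interval H G L ->
        (K \subset L) = (f K \subset f L)) /\
    (forall S : {set 'I_n}, exists2 K : {group gT}, in_interval H G K & f K = S).

From mathcomp Require Import all_boot all_fingroup.
Set Implicit Arguments. Unset Strict Implicit. Unset Printing Implicit Defensive.
Local Open Scope group_scope.

(* Induction on the rank of the Boolean interval.  Pick a coatom M and the
   complementary atom A, so that M :&: A = H.  By induction M = <H, m>; take
   a in A outside H and g = m a.  If <H, g> missed A it would lie below M,
   forcing a = m^-1 g into M :&: A = H; so A <= <H, g>, hence a, m and then
   M lie in <H, g>, which therefore lies above both M and A and equals G. *)

Definition boolean_embedding (I : finType) (gT : finGroupType) (H G : {group gT})
    (D : {set I}) (f : {group gT} -> {set I}) : Prop :=
  [/\ forall K L : {group gT}, in_interval H G K -> in_interval H G L ->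
        (K \subset L) = (f K \subset f L),
      forall K : {group gT}, in_interval H G K -> f K \subset D
    & forall S : {set I}, S \subset D ->
        exists2 K : {group gT}, in_interval H G K & f K = S].

Lemma mem_genU1r (gT : finGroupType) (A : {set gT}) (x : gT) :
  x \in <<A :|: [set x]>>.
Proof. by rewrite mem_gen // !inE eqxx orbT. Qed.

Section BooleanEmbedding.

Variables (I : finType) (gT : finGroupType) (H G : {group gT}).
Variables (D : {set I}) (f : {group gT} -> {set I}).
Hypotheses (sHG : H \subset G) (fB : boolean_embedding H G D f).

Lemma in_interval_bot : in_interval H G H.
Proof. by rewrite /in_interval subxx. Qed.

Lemma in_interval_top : in_interval H G G.
Proof. by rewrite /in_interval subxx sHG. Qed.

Lemma boolean_embedding_sub (K L : {group gT}) :
  in_interval H G K -> in_interval H G L -> (K \subset L) = (f K \subset f L).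
Proof. by case: fB => emb _ _; apply: emb. Qed.

Lemma boolean_embedding_subD (K : {group gT}) : in_interval H G K -> f K \subset D.
Proof. by case: fB => _ inD _; apply: inD. Qed.

Lemma boolean_embedding_bot : f H = set0.
Proof.
case: fB => _ _ /(_ set0 (sub0set D)) [K iK fK].
apply/eqP; rewrite -subset0 -fK -boolean_embedding_sub ?in_interval_bot //.
by case/andP: iK.
Qed.

Lemma boolean_embedding_top : f G = D.
Proof.
case: fB => _ inD /(_ D (subxx D)) [K iK fK].
apply/eqP; rewrite eqEsubset inD ?in_interval_top // -{1}fK.
by rewrite -boolean_embedding_sub ?in_interval_top //; case/andP: iK.
Qed.

Lemma boolean_embedding_restr (M : {group gT}) :
  in_interval H G M -> boolean_embedding H M (f M) f.
Proof.
move=> iM; case/andP: (iM) => sHM sMG; case: fB => emb inD surj.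
have iMG K : in_interval H M K -> in_interval H G K.
  by case/andP=> sHK sKM; rewrite /in_interval sHK (subset_trans sKM).
split=> [K L iK iL | K iK | S sSM]; first exact: emb (iMG K iK) (iMG L iL).
  by rewrite -(emb _ _ (iMG K iK) iM); case/andP: iK.
have [K iK fK] := surj S (subset_trans sSM (inD M iM)).
exists K => //; case/andP: (iK) => sHK _.
by rewrite /in_interval sHK (emb _ _ iK iM) fK.
Qed.

Lemma boolean_embedding_disjoint (A B : {group gT}) :
    in_interval H G A -> in_interval H G B -> f A :&: f B = set0 ->
  A :&: B \subset H.
Proof.
move=> iA iB fAB0; case/andP: (iA) => sHA sAG; case/andP: (iB) => sHB _.
have iAB : in_interval H G (A :&: B)%G.
  by rewrite /in_interval subsetI sHA sHB (subset_trans (subsetIl _ _) sAG).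
rewrite (boolean_embedding_sub iAB in_interval_bot) boolean_embedding_bot.
rewrite -fAB0 subsetI -!boolean_embedding_sub //.
by rewrite subsetIl subsetIr.
Qed.

Lemma boolean_embedding_coatom_atom (i : I) (M A : {group gT}) (m a : gT) :
    i \in D -> in_interval H G M -> f M = D :\ i ->
    in_interval H G A -> f A = [set i] ->
    <<H :|: [set m]>> = M -> a \in A -> a \notin H ->
  <<H :|: [set m * a]>> = G.
Proof.
move=> Di iM fM iA fA genM aA aNH.
case/andP: (iM) (iA) => _ sMG /andP[_ sAG].
have mM : m \in M by rewrite -genM mem_genU1r.
have maG : m * a \in G by apply: groupM; [apply: (subsetP sMG) | apply: (subsetP sAG)].
pose K := [group of <<H :|: [set m * a]>>].
have maK : m * a \in K by apply: mem_genU1r.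
have sHK : H \subset K by rewrite sub_gen // subsetUl.
have iK : in_interval H G K.
  by rewrite /in_interval sHK gen_subG subUset sHG sub1set.
have sAK : A \subset K.
  apply/negPn/negP => nsAK; case/negP: aNH.
  have sKM : K \subset M.
    rewrite (boolean_embedding_sub iK iM) fM subsetD1 boolean_embedding_subD //.
    by rewrite (boolean_embedding_sub iA iK) fA sub1set in nsAK.
  have aM : a \in M by rewrite -(groupMl a mM) (subsetP sKM).
  apply: (subsetP (boolean_embedding_disjoint iA iM _)); last by rewrite inE aA.
  by apply/setP=> x; rewrite fA fM !inE; case: eqP => // ->; rewrite eqxx.
have mK : m \in K by rewrite -(groupMr m (subsetP sAK a aA)).
have sMK : M \subset K by rewrite -genM gen_subG subUset sHK sub1set.
apply/eqP; rewrite eqEsubset gen_subG subUset sHG sub1set maG /=.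
rewrite (boolean_embedding_sub in_interval_top iK) boolean_embedding_top.
rewrite -(setD1K Di) subUset -fM -fA.
by rewrite -(boolean_embedding_sub iA iK) -(boolean_embedding_sub iM iK) sAK.
Qed.

End BooleanEmbedding.

Lemma boolean_embedding_gen1 (I : finType) (gT : finGroupType) (H : {group gT})
    (f : {group gT} -> {set I}) (n : nat) (G : {group gT}) (D : {set I}) :
    #|D| = n -> H \subset G -> boolean_embedding H G D f ->
  exists2 g : gT, g \in G & <<H :|: [set g]>> = G.
Proof.
elim: n G D => [|n IHn] G D cD sHG fB.
  have eGH : G :=: H.
    apply/eqP; rewrite eqEsubset sHG andbT.
    rewrite (boolean_embedding_sub fB (in_interval_top sHG) (in_interval_bot sHG)).
    rewrite (boolean_embedding_top sHG fB) (boolean_embedding_bot sHG fB).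
    by rewrite subset0 -cards_eq0 cD.
  by exists 1; rewrite ?group1 // eGH (setUidPl _) ?genGid ?sub1set.
have [i Di] : exists i, i \in D by apply/set0Pn; rewrite -card_gt0 cD.
case: (fB) => _ _ surj.
have [M iM fM] := surj (D :\ i) (subD1set D i).
have [A iA fA] : exists2 A : {group gT}, in_interval H G A & f A = [set i].
  by apply: surj; rewrite sub1set.
have [m _ genM] : exists2 m : gT, m \in M & <<H :|: [set m]>> = M.
  apply: (IHn M (f M)); first by move: cD; rewrite fM (cardsD1 i) Di => -[].
    by case/andP: iM.
  exact: (boolean_embedding_restr fB iM).
have [a aA aNH] : exists2 a, a \in A & a \notin H.
  apply/subsetPn; rewrite (boolean_embedding_sub fB iA (in_interval_bot sHG)).
  by rewrite fA (boolean_embedding_bot sHG fB) sub1set inE.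
have genG := boolean_embedding_coatom_atom sHG fB Di iM fM iA fA genM aA aNH.
by exists (m * a); rewrite // -genG mem_genU1r.
Qed.

Theorem theorem2p4 (gT : finGroupType) (H G : {group gT}) :
  H \subset G -> boolean_interval H G ->
  exists2 g : gT, g \in G & <<H :|: [set g]>>%g = G.
Proof.
move=> sHG [n [f [emb surj]]].
apply: (boolean_embedding_gen1 (D := [set: 'I_n]) (f := f) erefl sHG).
by split=> // K _; apply: subsetT.
Qed.
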